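(* Let $(\mathfrak g,[\cdot,\cdot],\llbracket\cdot,\cdot,\cdot\rrbracket)$ and $(\mathfrak g^*,[\cdot,\cdot]_*,\llbracket\cdot,\cdot,\cdot\rrbracket_* )$ be Lie-Yamaguti algebras (on a vector space and its dual). Then the quadruple $(\mathfrak g,\mathfrak g^*;(\mathrm{ad}^*,-\mathcal R^*\tau),(\mathfrak{ad}^*,-\mathfrak R^*\tau))$ is a matched pair of Lie-Yamaguti algebras (i.e. the double brackets below define a Lie-Yamaguti algebra on $\mathfrak g\oplus\mathfrak g^*$) if and only if there is a Lie-Yamaguti algebra structure on $\mathfrak g\oplus\mathfrak g^*$ for which $((\mathfrak g\oplus\mathfrak g^*,\mathcal B_0),\mathfrak g,\mathfrak g^* )$ is a Manin triple, where $\mathcal B_0(x+\xi,y+\eta)=\langle x,\eta\rangle+\langle\xi,y\rangle$ (in which case that structure is given by the double brackets).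
   Context: All vector spaces are finite-dimensional over a field of characteristic zero. A Lie-Yamaguti algebra is a vector space $\mathfrak g$ with a skew-symmetric bilinear map $[\cdot,\cdot]$ and a trilinear map $\llbracket\cdot,\cdot,\cdot\rrbracket$ skew-symmetric in its first two arguments satisfying: (LY1) $[[x,y],z]+[[y,z],x]+[[z,x],y]+\llbracket x,y,z\rrbracket+\llbracket y,z,x\rrbracket+\llbracket z,x,y\rrbracket=0$; (LY2) $\llbracket [x,y],z,w\rrbracket+\llbracket [y,z],x,w\rrbracket+\llbracket [z,x],y,w\rrbracket=0$; (LY3) $\llbracket x,y,[z,w]\rrbracket=[\llbracket x,y,z\rrbracket,w]+[z,\llbracket x,y,w\rrbracket]$; (LY4) $\llbracket x,y,\llbracket z,w,t\rrbracket\rrbracket=\llbracket\llbracket x,y,z\rrbracket,w,t\rrbracket+\llbracket z,\llbracket x,y,w\rrbracket,t\rrbracket+\llbracket z,w,\llbracket x,y,t\rrbracket\rrbracket$. Coadjoint maps: on $\mathfrak g^*$, $\langle\mathrm{ad}^*_x\alpha,z\rangle=-\langle\alpha,[x,z]\rangle$, $\langle\mathcal R^*(x,y)\alpha,z\rangle=-\langle\alpha,\llbracket z,x,y\rrbracket\rangle$, $\langle\mathcal L^*(x,y)\alpha,z\rangle=-\langle\alpha,\llbracket x,y,z\rrbracket\rangle$; on $\mathfrak g$, $\langle\mathfrak{ad}^*_\xi x,\eta\rangle=-\langle x,[\xi,\eta]_*\rangle$, $\langle\mathfrak R^*(\xi,\eta)x,\zeta\rangle=-\langle x,\llbracket\zeta,\xi,\eta\rrbracket_*\rangle$,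 $\langle\mathfrak L^*(\xi,\eta)x,\zeta\rangle=-\langle x,\llbracket\xi,\eta,\zeta\rrbracket_*\rangle$. ($-\mathcal R^*\tau$ means $(x,y)\mapsto-\mathcal R^*(y,x)$, similarly for $-\mathfrak R^*\tau$.) The double brackets on $\mathfrak g\oplus\mathfrak g^*$ are $[x+\xi,y+\eta]=[x,y]+\mathrm{ad}^*_x\eta-\mathrm{ad}^*_y\xi+[\xi,\eta]_*+\mathfrak{ad}^*_\xi y-\mathfrak{ad}^*_\eta x$ and $\llbracket x+\xi,y+\eta,z+\zeta\rrbracket=\llbracket x,y,z\rrbracket+\mathcal L^*(x,y)\zeta-\mathcal R^*(z,y)\xi+\mathcal R^*(z,x)\eta+\llbracket\xi,\eta,\zeta\rrbracket_*+\mathfrak L^*(\xi,\eta)z-\mathfrak R^*(\zeta,\eta)x+\mathfrak R^*(\zeta,\xi)y$; the quadruple is called a matched pair when these form a Lie-Yamaguti algebra. A quadratic Lie-Yamaguti algebra $(\mathfrak h,\mathcal B)$ is a Lie-Yamaguti algebra with a nondegenerate symmetric bilinear form with $\mathcal B([x,y],z)=-\mathcal B(y,[x,z])$ and $\mathcal B(\llbracket x,y,z\rrbracket,w)=\mathcal B(x,\llbracket w,z,y\rrbracket)$. A Manin triple $((\mathfrak h,\mathcal B),\mathfrak h_1,\mathfrak h_2)$ is a quadratic Lie-Yamaguti algebra with $\mathfrak h=\mathfrak h_1\oplus\mathfrak h_2$, where $\mathfrak h_1,\mathfrak h_2$ are isotropic subalgebras (carrying their given structures), and for all $x_1,y_1\in\mathfrak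 h_1$, $x_2,y_2\in\mathfrak h_2$: $\mathrm{pr}_1\llbracket x_1,y_1,x_2\rrbracket=\mathrm{pr}_1\llbracket x_1,x_2,y_1\rrbracket=\mathrm{pr}_2\llbracket x_2,y_2,x_1\rrbracket=\mathrm{pr}_2\llbracket x_2,x_1,y_2\rrbracket=0$ ($\mathrm{pr}_i$ the projections onto $\mathfrak h_i$). *)

From HB Require Import structures.
From mathcomp Require Import all_boot all_order all_algebra.
Set Implicit Arguments. Unset Strict Implicit. Unset Printing Implicit Defensive.
Import Order.TTheory GRing.Theory Num.Theory.
Local Open Scope ring_scope.

Section LY.
Variables (F : fieldType) (V : lmodType F).

Definition bilinear_map (br : V -> V -> V) : Prop :=
  forall (a : F) (x y z : V),
    br (a *: x + y) z = a *: br x z + br y z /\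
    br z (a *: x + y) = a *: br z x + br z y.

Definition trilinear_map (tr : V -> V -> V -> V) : Prop :=
  forall (a : F) (x y u v : V),
    [/\ tr (a *: x + y) u v = a *: tr x u v + tr y u v,
        tr u (a *: x + y) v = a *: tr u x v + tr u y v &
        tr u v (a *: x + y) = a *: tr u v x + tr u v y].

Definition LieYamaguti (br : V -> V -> V) (tr : V -> V -> V -> V) : Prop :=
  bilinear_map br /\ trilinear_map tr /\
      (forall x y, br x y = - br y x) /\
      (forall x y z, tr x y z = - tr y x z) /\
      (forall x y z,
         br (br x y) z + br (br y z) x + br (br z x) y
         + tr x y z + tr y z x + tr z x y = 0) /\
      (forall x y z w,
         tr (br x y) z w + tr (br y z) x w + tr (br z x) y w = 0) /\
      (forall x y z w,
         tr x y (br z w) = br (tr x y z) w + br z (tr x y w)) /\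
      (forall x y z w t,
         tr x y (tr z w t) =
         tr (tr x y z) w t + tr z (tr x y w) t + tr z w (tr x y t)).

Definition quadraticLY (br : V -> V -> V) (tr : V -> V -> V -> V)
  (B : V -> V -> F) : Prop :=
  LieYamaguti br tr /\
      (forall (a : F) x y z, B (a *: x + y) z = a * B x z + B y z) /\
      (forall x y, B x y = B y x) /\
      (forall x, (forall y, B x y = 0) -> x = 0) /\
      (forall x y z, B (br x y) z = - B y (br x z)) /\
      (forall x y z w, B (tr x y z) w = B x (tr w z y)).
End LY.

Section Dual.
Variables (F : fieldType) (n : nat).
Local Notation V := 'rV[F]_n.

(* g = F^n and g^dual = F^n, identified through the standard pairing
   <x, xi> = sum_i x_i xi_i (dual basis). *)
Definition pairing (u v : V) : F := \sum_(i < n) u 0 i * v 0 i.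

Definition basisv (j : 'I_n) : V := delta_mx 0 j.

(* coadjoint maps: the unique vectors with
   <ad^dual_x a, z> = - <a, [x,z]>,
   <R^dual(x,y) a, z> = - <a, [[z,x,y]]>,
   <L^dual(x,y) a, z> = - <a, [[x,y,z]]>  (written in coordinates). *)
Definition coad (br : V -> V -> V) (x a : V) : V :=
  \row_j (- pairing a (br x (basisv j))).
Definition coR (tr : V -> V -> V -> V) (x y a : V) : V :=
  \row_j (- pairing a (tr (basisv j) x y)).
Definition coL (tr : V -> V -> V -> V) (x y a : V) : V :=
  \row_j (- pairing a (tr x y (basisv j))).

Local Notation D := (V * V)%type.

(* The double brackets on g (+) g^dual; first component in g, second in g^dual.
   br, tr : structure on g ; brs, trs : structure on g^dual. *)
Definition dbl_br (br brs : V -> V -> V) (u v : D) : D :=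
  let: (x, xi) := u in let: (y, eta) := v in
  (br x y + coad brs xi y - coad brs eta x,
   coad br x eta - coad br y xi + brs xi eta).

Definition dbl_tr (tr trs : V -> V -> V -> V) (u v w : D) : D :=
  let: (x, xi) := u in let: (y, eta) := v in let: (z, zeta) := w in
  (tr x y z + coL trs xi eta z - coR trs zeta eta x + coR trs zeta xi y,
   coL tr x y zeta - coR tr z y xi + coR tr z x eta + trs xi eta zeta).

Definition matched_pair (br : V -> V -> V) (tr : V -> V -> V -> V)
  (brs : V -> V -> V) (trs : V -> V -> V -> V) : Prop :=
  LieYamaguti (dbl_br br brs) (dbl_tr tr trs).

Definition B0 (u v : D) : F := pairing u.1 v.2 + pairing u.2 v.1.

Definition manin_triple (br : V -> V -> V) (tr : V -> V -> V -> V)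
  (brs : V -> V -> V) (trs : V -> V -> V -> V)
  (b : D -> D -> D) (t : D -> D -> D -> D) : Prop :=
  quadraticLY b t B0 /\
      (forall x y : V, B0 (x, 0) (y, 0) = 0) /\
      (forall xi eta : V, B0 (0, xi) (0, eta) = 0) /\
      (forall x y, b (x, 0) (y, 0) = (br x y, 0)) /\
      (forall x y z, t (x, 0) (y, 0) (z, 0) = (tr x y z, 0)) /\
      (forall xi eta, b (0, xi) (0, eta) = (0, brs xi eta)) /\
      (forall xi eta zeta, t (0, xi) (0, eta) (0, zeta) = (0, trs xi eta zeta)) /\
      (forall (x1 y1 x2 y2 : V),
         [/\ (t (x1, 0) (y1, 0) (0, x2)).1 = 0,
             (t (x1, 0) (0, x2) (y1, 0)).1 = 0,
             (t (0, x2) (0, y2) (x1, 0)).2 = 0 &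
             (t (0, x2) (x1, 0) (0, y2)).2 = 0]).
End Dual.

(* Both directions rest on the invariance of B0.  The double brackets are
   built from the coadjoint maps, which are exactly the transposes that make
   B0 invariant, so a matched pair is a Manin triple.  Conversely, in a
   Manin triple every mixed bracket is determined by pairing it against g or
   g^* through invariance, isotropy and the projection conditions, and the
   values so obtained are those of the double brackets; hence the quadratic
   structure is the double one and the matched-pair axioms follow. *)
From HB Require Import structures.
From mathcomp Require Import all_boot all_order all_algebra.
From mathcomp Require Import ring.
From Stdlib Require Import FunctionalExtensionality.
Import GRing.Theory.
Local Open Scope ring_scope.
Set Implicit Arguments. Unset Strict Implicit.

Section LinearFun.
Variables (R : pzRingType) (U V : lmodType R) (f : U -> V).
Hypothesis linf : linear f.

Lemma linear_fun0 : f 0 = 0.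
Proof.
have f00 := linf 1 0 0; rewrite !scale1r addr0 in f00.
by apply: (addIr (f 0)); rewrite add0r -f00.
Qed.

Lemma linear_funD x y : f (x + y) = f x + f y.
Proof. by rewrite -[x in LHS]scale1r linf scale1r. Qed.

Lemma linear_fun_sum (I : finType) (c : I -> R) (v : I -> U) :
  f (\sum_i c i *: v i) = \sum_i c i *: f (v i).
Proof.
elim/big_rec2: _ => [|i y1 y2 _ <-]; first exact: linear_fun0.
by rewrite linf.
Qed.
End LinearFun.

Section Multilinear.
Variables (K : fieldType) (W : lmodType K).
Implicit Types (br : W -> W -> W) (tr : W -> W -> W -> W).

Lemma bilinear_mapl br : bilinear_map br -> forall z, linear (br^~ z).
Proof. by move=> hbr z a x y /=; case: (hbr a x y z). Qed.

Lemma bilinear_mapr br : bilinear_map br -> forall z, linear (br z).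
Proof. by move=> hbr z a x y /=; case: (hbr a x y z). Qed.

Lemma trilinear_map1 tr : trilinear_map tr -> forall u v, linear (fun x => tr x u v).
Proof. by move=> htr u v a x y /=; case: (htr a x y u v). Qed.

Lemma trilinear_map2 tr : trilinear_map tr -> forall u v, linear (tr u^~ v).
Proof. by move=> htr u v a x y /=; case: (htr a x y u v). Qed.

Lemma trilinear_map3 tr : trilinear_map tr -> forall u v, linear (tr u v).
Proof. by move=> htr u v a x y /=; case: (htr a x y u v). Qed.

Lemma bilinear_map0l br : bilinear_map br -> forall y, br 0 y = 0.
Proof. by move=> hbr y; exact: linear_fun0 (bilinear_mapl hbr y). Qed.

Lemma bilinear_map0r br : bilinear_map br -> forall x, br x 0 = 0.
Proof. by move=> hbr x; exact: linear_fun0 (bilinear_mapr hbr x). Qed.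

Lemma trilinear_map0_1 tr : trilinear_map tr -> forall u v, tr 0 u v = 0.
Proof. by move=> htr u v; exact: linear_fun0 (trilinear_map1 htr u v). Qed.

Lemma trilinear_map0_2 tr : trilinear_map tr -> forall u v, tr u 0 v = 0.
Proof. by move=> htr u v; exact: linear_fun0 (trilinear_map2 htr u v). Qed.

Lemma trilinear_map0_3 tr : trilinear_map tr -> forall u v, tr u v 0 = 0.
Proof. by move=> htr u v; exact: linear_fun0 (trilinear_map3 htr u v). Qed.
End Multilinear.

Section Pairing.
Variables (F : fieldType) (n : nat).
Local Notation V := 'rV[F]_n.
Implicit Types (u v w x y z a : V).


Lemma pairingC u v : pairing u v = pairing v u.
Proof. by apply: eq_bigr => i _; rewrite mulrC. Qed.

Lemma pairingDl u v w : pairing (u + v) w = pairing u w + pairing v w.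
Proof. by rewrite /pairing -big_split; apply: eq_bigr => i _; rewrite mxE mulrDl. Qed.

Lemma pairingZl (c : F) u w : pairing (c *: u) w = c * pairing u w.
Proof. by rewrite /pairing mulr_sumr; apply: eq_bigr => i _; rewrite mxE mulrA. Qed.

Lemma pairingNl u w : pairing (- u) w = - pairing u w.
Proof. by rewrite -scaleN1r pairingZl mulN1r. Qed.

Lemma pairing0l w : pairing 0 w = 0.
Proof. by rewrite -(scale0r 0) pairingZl mul0r. Qed.

Lemma pairingDr u v w : pairing w (u + v) = pairing w u + pairing w v.
Proof. by rewrite !(pairingC w) pairingDl. Qed.

Lemma pairingNr u w : pairing w (- u) = - pairing w u.
Proof. by rewrite !(pairingC w) pairingNl. Qed.

Lemma pairingZr (c : F) u w : pairing w (c *: u) = c * pairing w u.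
Proof. by rewrite !(pairingC w) pairingZl. Qed.

Lemma pairing0r w : pairing w 0 = 0.
Proof. by rewrite pairingC pairing0l. Qed.

Lemma pairing_basisv u j : pairing u (basisv F j) = u 0 j.
Proof.
rewrite /pairing (bigD1 j) //= big1 ?addr0; first by rewrite mxE !eqxx mulr1.
by move=> i /negPf neq_ij; rewrite mxE eqxx neq_ij mulr0.
Qed.

Lemma pairing_inj u v : (forall z, pairing u z = pairing v z) -> u = v.
Proof. by move=> eq_uv; apply/rowP => j; rewrite -!pairing_basisv eq_uv. Qed.

Lemma pairing_sumr a (c : 'I_n -> F) (v : 'I_n -> V) :
  pairing a (\sum_j c j *: v j) = \sum_j c j * pairing a (v j).
Proof.
rewrite (big_morph (pairing a) (fun u v => pairingDr u v a) (pairing0r a)).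
by apply: eq_bigr => j _; rewrite pairingZr.
Qed.

(* The coordinate form shared by coad, coR and coL: minus the transpose of f
   with respect to the pairing. *)
Definition dual_map (f : V -> V) a : V := \row_j (- pairing a (f (basisv F j))).

Lemma pairing_dual_map (f : V -> V) a z : linear f ->
  pairing (dual_map f a) z = - pairing a (f z).
Proof.
move=> linf; rewrite {2}(row_sum_delta z) linear_fun_sum // pairing_sumr.
rewrite {1}/pairing -sumrN; apply: eq_bigr => i _.
by rewrite mxE mulrC mulrN.
Qed.

Lemma dual_map0 (f : V -> V) : dual_map f 0 = 0.
Proof. by apply/rowP => j; rewrite !mxE pairing0l oppr0. Qed.

Lemma dual_map_null (f : V -> V) a : f =1 (fun=> 0) -> dual_map f a = 0.
Proof. by move=> f0; apply/rowP => j; rewrite !mxE f0 pairing0r oppr0. Qed.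

Variables (br : V -> V -> V) (tr : V -> V -> V -> V).
Hypotheses (hbr : bilinear_map br) (htr : trilinear_map tr).

Lemma pairing_coadl x a z : pairing (coad br x a) z = - pairing a (br x z).
Proof. exact: (pairing_dual_map _ _ (bilinear_mapr hbr x)). Qed.

Lemma pairing_coRl x y a z : pairing (coR tr x y a) z = - pairing a (tr z x y).
Proof. exact: (pairing_dual_map _ _ (trilinear_map1 htr x y)). Qed.

Lemma pairing_coLl x y a z : pairing (coL tr x y a) z = - pairing a (tr x y z).
Proof. exact: (pairing_dual_map _ _ (trilinear_map3 htr x y)). Qed.

Lemma pairing_coadr x a z : pairing z (coad br x a) = - pairing a (br x z).
Proof. by rewrite pairingC pairing_coadl. Qed.

Lemma pairing_coRr x y a z : pairing z (coR tr x y a) = - pairing a (tr z x y).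
Proof. by rewrite pairingC pairing_coRl. Qed.

Lemma pairing_coLr x y a z : pairing z (coL tr x y a) = - pairing a (tr x y z).
Proof. by rewrite pairingC pairing_coLl. Qed.

Lemma coad0 x : coad br x 0 = 0. Proof. exact: (@dual_map0 (br x)). Qed.
Lemma coR0 x y : coR tr x y 0 = 0. Proof. exact: (@dual_map0 (fun z => tr z x y)). Qed.
Lemma coL0 x y : coL tr x y 0 = 0. Proof. exact: (@dual_map0 (tr x y)). Qed.

Lemma coad_vec0 a : coad br 0 a = 0.
Proof. exact: (@dual_map_null (br 0) _ (bilinear_map0l hbr)). Qed.

Lemma coR_vec0l y a : coR tr 0 y a = 0.
Proof. exact: (@dual_map_null (fun z => tr z 0 y) _ (trilinear_map0_2 htr ^~ y)). Qed.

Lemma coR_vec0r x a : coR tr x 0 a = 0.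
Proof. exact: (@dual_map_null (fun z => tr z x 0) _ (trilinear_map0_3 htr ^~ x)). Qed.

Lemma coL_vec0l y a : coL tr 0 y a = 0.
Proof. exact: (@dual_map_null (tr 0 y) _ (trilinear_map0_1 htr y)). Qed.

Lemma coL_vec0r x a : coL tr x 0 a = 0.
Proof. exact: (@dual_map_null (tr x 0) _ (trilinear_map0_2 htr x)). Qed.
End Pairing.

Section DoubleBrackets.
Variables (F : fieldType) (n : nat).
Local Notation V := 'rV[F]_n.
Local Notation D := (V * V)%type.
Implicit Types (x y z w xi eta zeta : V) (p q r : D).

Variables (br brs : V -> V -> V) (tr trs : V -> V -> V -> V).
Hypotheses (hbr : bilinear_map br) (hbrs : bilinear_map brs).
Hypotheses (htr : trilinear_map tr) (htrs : trilinear_map trs).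

Lemma pair_split x xi : (x, xi) = (x, 0) + (0, xi) :> D.
Proof. by rewrite -[RHS]/(x + 0, 0 + xi) addr0 add0r. Qed.

Lemma B0_vecr p z : B0 p (z, 0) = pairing p.2 z.
Proof. by rewrite /B0 /= pairing0r add0r. Qed.

Lemma B0_covecr p z : B0 p (0, z) = pairing p.1 z.
Proof. by rewrite /B0 /= pairing0r addr0. Qed.

Lemma B0_vecl p z : B0 (z, 0) p = pairing z p.2.
Proof. by rewrite /B0 /= pairing0l addr0. Qed.

Lemma B0_covecl p z : B0 (0, z) p = pairing z p.1.
Proof. by rewrite /B0 /= pairing0l add0r. Qed.

Lemma B0Nl p q : B0 (- p) q = - B0 p q.
Proof. by rewrite /B0 /= !pairingNl opprD. Qed.

Lemma B0Nr p q : B0 q (- p) = - B0 q p.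
Proof. by rewrite /B0 /= !pairingNr opprD. Qed.

Lemma manin_triple_brE b t : manin_triple br tr brs trs b t -> b = dbl_br br brs.
Proof.
move=> [[[hb [_ [skew_b _]]] [_ [_ [_ [inv_b _]]]]] [_ [_ [b_vec [_ [b_covec _]]]]]].
have b_mixed x eta : b (x, 0) (0, eta) = (- coad brs eta x, coad br x eta).
  apply: injective_projections; apply: pairing_inj => z /=.
    rewrite -B0_covecr skew_b B0Nl inv_b b_covec B0_vecl /=.
    by rewrite pairingNl (pairing_coadl hbrs) !opprK.
  by rewrite -B0_vecr inv_b b_vec B0_covecl /= (pairing_coadl hbr).
apply: functional_extensionality => -[x xi].
apply: functional_extensionality => -[y eta].
rewrite {1}[(x, xi)]pair_split {1}[(y, eta)]pair_split.
rewrite (linear_funD (bilinear_mapl hb _)) !(linear_funD (bilinear_mapr hb _)).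
rewrite (skew_b (0, xi)) !b_mixed b_vec b_covec.
by congr pair; apply/rowP => j; rewrite !mxE; ring.
Qed.

Lemma manin_triple_trE b t : manin_triple br tr brs trs b t -> t = dbl_tr tr trs.
Proof.
move=> [[[_ [ht [_ [skew_t _]]]] [_ [symB [_ [_ inv_t]]]]]].
move=> [_ [_ [_ [t_vec [_ [t_covec proj]]]]]].
have t_vvc x y z : t (x, 0) (y, 0) (0, z) = (0, coL tr x y z).
  apply: injective_projections => /=; first by case: (proj x y z 0).
  apply: pairing_inj => w.
  rewrite -B0_vecr inv_t (skew_t (w, 0)) B0Nr symB inv_t t_vec B0_covecl /=.
  by rewrite (pairing_coLl htr).
have t_ccv xi eta z : t (0, xi) (0, eta) (z, 0) = (coL trs xi eta z, 0).
  apply: injective_projections => /=; last by case: (proj z 0 xi eta).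
  apply: pairing_inj => w.
  rewrite -B0_covecr inv_t (skew_t (0, w)) B0Nr symB inv_t t_covec B0_vecl /=.
  by rewrite (pairing_coLl htrs).
have t_vcv x eta z : t (x, 0) (0, eta) (z, 0) = (0, coR tr z x eta).
  apply: injective_projections => /=; first by case: (proj x z eta 0).
  apply: pairing_inj => w.
  rewrite -B0_vecr inv_t t_vvc B0_vecl /=.
  by rewrite pairingC (pairing_coLl htr) (pairing_coRl htr).
have t_cvc xi y zeta : t (0, xi) (y, 0) (0, zeta) = (coR trs zeta xi y, 0).
  apply: injective_projections => /=; last by case: (proj y 0 xi zeta).
  apply: pairing_inj => w.
  rewrite -B0_covecr inv_t t_ccv B0_covecl /=.
  by rewrite pairingC (pairing_coLl htrs) (pairing_coRl htrs).
apply: functional_extensionality => -[x xi].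
apply: functional_extensionality => -[y eta].
apply: functional_extensionality => -[z zeta].
rewrite {1}[(x, xi)]pair_split {1}[(y, eta)]pair_split {1}[(z, zeta)]pair_split.
rewrite (linear_funD (trilinear_map1 ht _ _)) !(linear_funD (trilinear_map2 ht _ _)).
rewrite !(linear_funD (trilinear_map3 ht _ _)).
rewrite (skew_t (x, 0) (0, eta) (0, zeta)) (skew_t (0, xi) (y, 0) (z, 0)).
rewrite t_vec t_covec !t_vvc !t_vcv !t_ccv !t_cvc.
by congr pair; apply/rowP => j; rewrite !mxE; ring.
Qed.

Lemma B0_linearl (c : F) p q r : B0 (c *: p + q) r = c * B0 p r + B0 q r.
Proof.
case: p q r => [x1 x2] [y1 y2] [z1 z2]; rewrite /B0 /=.
by rewrite !(pairingDl, pairingZl) mulrDr addrACA.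
Qed.

Lemma B0C p q : B0 p q = B0 q p.
Proof. by rewrite /B0 addrC (pairingC p.1) (pairingC p.2). Qed.

Lemma B0_nondegenerate p : (forall q, B0 p q = 0) -> p = 0.
Proof.
move=> p0; apply: injective_projections; apply: pairing_inj => z /=.
  by rewrite -B0_covecr p0 pairing0l.
by rewrite -B0_vecr p0 pairing0l.
Qed.

Hypotheses (skew_br : forall x y, br x y = - br y x).
Hypotheses (skew_brs : forall x y, brs x y = - brs y x).

Lemma B0_dbl_br_invariant p q r :
  B0 (dbl_br br brs p q) r = - B0 q (dbl_br br brs p r).
Proof.
case: p q r => [x xi] [y eta] [z zeta]; rewrite /dbl_br /B0 /=.
rewrite !(pairingDl, pairingNl, pairingDr, pairingNr).
rewrite !(pairing_coadl hbr) !(pairing_coadl hbrs).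
rewrite !(pairing_coadr hbr) !(pairing_coadr hbrs).
rewrite (pairingC (br x y)) (pairingC (brs xi eta)) (skew_br z y) (skew_brs zeta eta).
by rewrite !pairingNr; ring.
Qed.

Lemma B0_dbl_tr_invariant p q r s :
  B0 (dbl_tr tr trs p q r) s = B0 p (dbl_tr tr trs s r q).
Proof.
case: p q r s => [x xi] [y eta] [z zeta] [w omega]; rewrite /dbl_tr /B0 /=.
rewrite !(pairingDl, pairingNl, pairingDr, pairingNr).
rewrite !(pairing_coLl htr) !(pairing_coLl htrs) !(pairing_coLr htr) !(pairing_coLr htrs).
rewrite !(pairing_coRl htr) !(pairing_coRl htrs) !(pairing_coRr htr) !(pairing_coRr htrs).
by rewrite (pairingC (tr x y z)) (pairingC (trs xi eta zeta)); ring.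
Qed.

Let zero_simpl := (bilinear_map0l hbr, bilinear_map0r hbr,
  bilinear_map0l hbrs, bilinear_map0r hbrs,
  trilinear_map0_1 htr, trilinear_map0_2 htr, trilinear_map0_3 htr,
  trilinear_map0_1 htrs, trilinear_map0_2 htrs, trilinear_map0_3 htrs,
  coad0, coR0, coL0, coad_vec0 hbr, coad_vec0 hbrs,
  coR_vec0l htr, coR_vec0r htr, coR_vec0l htrs, coR_vec0r htrs,
  coL_vec0l htr, coL_vec0r htr, coL_vec0l htrs, coL_vec0r htrs,
  addr0, add0r, subr0, sub0r, oppr0).

Lemma dbl_br_vec x y : dbl_br br brs (x, 0) (y, 0) = (br x y, 0).
Proof. by rewrite /dbl_br !zero_simpl. Qed.

Lemma dbl_br_covec xi eta : dbl_br br brs (0, xi) (0, eta) = (0, brs xi eta).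
Proof. by rewrite /dbl_br !zero_simpl. Qed.

Lemma dbl_tr_vec x y z : dbl_tr tr trs (x, 0) (y, 0) (z, 0) = (tr x y z, 0).
Proof. by rewrite /dbl_tr !zero_simpl. Qed.

Lemma dbl_tr_covec xi eta zeta :
  dbl_tr tr trs (0, xi) (0, eta) (0, zeta) = (0, trs xi eta zeta).
Proof. by rewrite /dbl_tr !zero_simpl. Qed.

Lemma dbl_tr_proj x1 y1 x2 y2 :
  [/\ (dbl_tr tr trs (x1, 0) (y1, 0) (0, x2)).1 = 0,
      (dbl_tr tr trs (x1, 0) (0, x2) (y1, 0)).1 = 0,
      (dbl_tr tr trs (0, x2) (0, y2) (x1, 0)).2 = 0 &
      (dbl_tr tr trs (0, x2) (x1, 0) (0, y2)).2 = 0].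
Proof. by split; rewrite /dbl_tr /= !zero_simpl. Qed.

Lemma manin_triple_dbl : matched_pair br tr brs trs ->
  manin_triple br tr brs trs (dbl_br br brs) (dbl_tr tr trs).
Proof.
move=> dbl_LY; split.
  split; first exact: dbl_LY.
  split; first exact: B0_linearl.
  split; first exact: B0C.
  split; first exact: B0_nondegenerate.
  split; [exact: B0_dbl_br_invariant | exact: B0_dbl_tr_invariant].
split; first by move=> x y; rewrite B0_vecl pairing0r.
split; first by move=> xi eta; rewrite B0_covecl pairing0r.
split; first exact: dbl_br_vec.
split; first exact: dbl_tr_vec.
split; first exact: dbl_br_covec.
split; [exact: dbl_tr_covec | exact: dbl_tr_proj].
Qed.
End DoubleBrackets.

Theorem proposition4p8 (F : fieldType) (n : nat)
  (charF : [pchar F] =i pred0)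
  (br : 'rV[F]_n -> 'rV[F]_n -> 'rV[F]_n)
  (tr : 'rV[F]_n -> 'rV[F]_n -> 'rV[F]_n -> 'rV[F]_n)
  (brs : 'rV[F]_n -> 'rV[F]_n -> 'rV[F]_n)
  (trs : 'rV[F]_n -> 'rV[F]_n -> 'rV[F]_n -> 'rV[F]_n) :
  LieYamaguti br tr -> LieYamaguti brs trs ->
  (matched_pair br tr brs trs <->
   exists (b : ('rV[F]_n * 'rV[F]_n)%type -> ('rV[F]_n * 'rV[F]_n)%type ->
               ('rV[F]_n * 'rV[F]_n)%type)
          (t : ('rV[F]_n * 'rV[F]_n)%type -> ('rV[F]_n * 'rV[F]_n)%type ->
               ('rV[F]_n * 'rV[F]_n)%type -> ('rV[F]_n * 'rV[F]_n)%type),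
     manin_triple br tr brs trs b t)
  /\
  (forall b t, manin_triple br tr brs trs b t ->
     b = dbl_br br brs /\ t = dbl_tr tr trs).
Proof.
move=> [hbr [htr [skew_br _]]] [hbrs [htrs [skew_brs _]]].
have dblE b t : manin_triple br tr brs trs b t ->
    b = dbl_br br brs /\ t = dbl_tr tr trs.
  by move=> mt; split; [exact: manin_triple_brE mt | exact: manin_triple_trE mt].
split=> //; split.
  by move=> dbl_LY; exists (dbl_br br brs), (dbl_tr tr trs); exact: manin_triple_dbl.
move=> [b [t mt]]; rewrite /matched_pair.
by have [<- <-] := dblE b t mt; case: mt => -[].
Qed.
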